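(* Let $\sigma_1,\sigma_2\subset\mathbb R^n$ be two $n$-dimensional simplices with $\sigma_1\cap\sigma_2=\tau$ a common facet. Let $\mathcal D:=\sigma_1^0\cup(\sigma_2\setminus\partial\tau)$ and $\overline{\mathcal D}:=\sigma_1\cup\sigma_2$. Then there exists a semialgebraic homeomorphism $\psi:\sigma_2\to\overline{\mathcal D}$ such that $\psi(\sigma_2\setminus\tau)=\mathcal D$ and $\psi$ restricted to $\partial\sigma_2\setminus\tau^0$ is the identity.
   Context: For a simplex $\rho$, $\rho^0$ denotes its relative interior and $\partial\rho=\rho\setminus\rho^0$ its relative boundary. A facet of an $n$-simplex is a face of dimension $n-1$. *)

From HB Require Import structures.
From mathcomp Require Import all_boot all_order all_algebra.
Set Implicit Arguments. Unset Strict Implicit. Unset Printing Implicit Defensive.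
Import Order.TTheory GRing.Theory Num.Theory.
Local Open Scope ring_scope.

Section Defs.
Variable R : rcfType.

Inductive pexpr : Type :=
  | PConst of R
  | PVar of nat
  | PAdd of pexpr & pexpr
  | PMul of pexpr & pexpr
  | POpp of pexpr.

(* coordinate i of x (0 outside the range) *)
Definition coord_env (n : nat) (x : 'rV[R]_n) (i : nat) : R :=
  match ltnP i n with
  | LtnNotGeq Hi => x 0 (Ordinal Hi)
  | _ => 0
  end.

Fixpoint peval (env : nat -> R) (p : pexpr) : R :=
  match p with
  | PConst c => c
  | PVar i => env i
  | PAdd p q => peval env p + peval env q
  | PMul p q => peval env p * peval env q
  | POpp p => - peval env p
  end.

(* an atom (p, true) means p(x) > 0, (p, false) means p(x) = 0 *)
Definition atom_holds (n : nat) (x : 'rV[R]_n) (a : pexpr * bool) : bool :=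
  if a.2 then 0 < peval (coord_env x) a.1 else peval (coord_env x) a.1 == 0.

(* semialgebraic subset of R^n: finite union of basic sets
   {p_1 = 0, ..., q_1 > 0, ...} *)
Definition semialgebraic (n : nat) (S : 'rV[R]_n -> Prop) : Prop :=
  exists L : seq (seq (pexpr * bool)),
    forall x, S x <-> has (fun c => all (atom_holds x) c) L.

(* f restricted to A is semialgebraic: its graph in R^n x R^m is semialgebraic *)
Definition semialgebraic_map (n m : nat) (A : 'rV[R]_n -> Prop)
    (f : 'rV[R]_n -> 'rV[R]_m) : Prop :=
  semialgebraic (fun z : 'rV[R]_(n + m) =>
    A (lsubmx z) /\ rsubmx z = f (lsubmx z)).

Definition edist (n : nat) (x y : 'rV[R]_n) : R :=
  Num.sqrt (\sum_(i < n) (x 0 i - y 0 i) ^+ 2).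

Definition continuous_on (n m : nat) (A : 'rV[R]_n -> Prop)
    (f : 'rV[R]_n -> 'rV[R]_m) : Prop :=
  forall x, A x -> forall e : R, 0 < e -> exists2 d : R, 0 < d &
    forall y, A y -> edist x y < d -> edist (f x) (f y) < e.

Definition homeomorphism_on (n m : nat) (A : 'rV[R]_n -> Prop)
    (B : 'rV[R]_m -> Prop) (f : 'rV[R]_n -> 'rV[R]_m) : Prop :=
  (forall x, A x -> B (f x)) /\ continuous_on A f /\
  exists g : 'rV[R]_m -> 'rV[R]_n,
    [/\ forall y, B y -> A (g y), continuous_on B g,
        forall x, A x -> g (f x) = x & forall y, B y -> f (g y) = y].

(* the k points (rows of V) are affinely independent *)
Definition aff_indep (k n : nat) (V : 'M[R]_(k, n)) : bool :=
  row_free (row_mx V (const_mx 1 : 'cV[R]_k)).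

Definition simplex (k n : nat) (V : 'M[R]_(k, n)) (x : 'rV[R]_n) : Prop :=
  exists w : 'rV[R]_k, [/\ forall i, 0 <= w 0 i, \sum_(i < k) w 0 i = 1 &
                          x = w *m V].

Definition simplex_relint (k n : nat) (V : 'M[R]_(k, n)) (x : 'rV[R]_n) : Prop :=
  exists w : 'rV[R]_k, [/\ forall i, 0 < w 0 i, \sum_(i < k) w 0 i = 1 &
                          x = w *m V].

Definition simplex_bd (k n : nat) (V : 'M[R]_(k, n)) (x : 'rV[R]_n) : Prop :=
  simplex V x /\ ~ simplex_relint V x.

Definition facet_vertices (k n : nat) (V : 'M[R]_(k.+1, n)) (i : 'I_k.+1)
  : 'M[R]_(k, n) := row' i V.

End Defs.

From HB Require Import structures.
From mathcomp Require Import all_boot all_order all_algebra.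
From mathcomp Require Import ring lra.
Set Implicit Arguments. Unset Strict Implicit. Unset Printing Implicit Defensive.
Import Order.TTheory GRing.Theory Num.Theory.
Local Open Scope ring_scope.

(* Work in barycentric coordinates l with respect to sigma_2, let a be the
   vertex opposite tau and mu l = min_(j != a) l_j.  The vertex of sigma_1
   opposite tau has coordinates apex with apex_a < 0.  The piecewise-linear map
     l |-> (l_a - n mu, l_j + mu)                              if l_a >= n mu,
     l |-> (l_j - mu + 2 l_a / n)_(j != a) + (n mu - l_a) apex   if l_a <  n mu
   sends the part of sigma_2 where l_a >= n mu onto sigma_2 and the part where
   l_a <= n mu onto sigma_1; on l_a = n mu both formulas agree and land in tau.
   It is the identity where mu = 0, which covers the boundary of sigma_2
   outside the open facet tau, and its inverse is again piecewise linear.  Both maps are built from +, * and min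
   of coordinates: this makes them continuous, and their graphs are zero sets of
   such expressions, which are semialgebraic because an expression with min
   agrees with a polynomial on each cell of a finite semialgebraic partition. *)

Section MinExpressions.
Variable R : rcfType.

Inductive minexpr : Type :=
  | MConst of R
  | MVar of nat
  | MAdd of minexpr & minexpr
  | MMul of minexpr & minexpr
  | MOpp of minexpr
  | MMin of minexpr & minexpr.

Fixpoint meval (env : nat -> R) (t : minexpr) : R :=
  match t with
  | MConst c => c
  | MVar i => env i
  | MAdd p q => meval env p + meval env q
  | MMul p q => meval env p * meval env q
  | MOpp p => - meval env p
  | MMin p q => Num.min (meval env p) (meval env q)
  end.

Fixpoint msubst (s : nat -> minexpr) (t : minexpr) : minexpr :=
  match t with
  | MConst c => MConst c
  | MVar i => s i
  | MAdd p q => MAdd (msubst s p) (msubst s q)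
  | MMul p q => MMul (msubst s p) (msubst s q)
  | MOpp p => MOpp (msubst s p)
  | MMin p q => MMin (msubst s p) (msubst s q)
  end.

Definition MMax (p q : minexpr) := MOpp (MMin (MOpp p) (MOpp q)).

Definition msum (l : seq minexpr) := foldr MAdd (MConst 0) l.

Definition mmin_seq (t0 : minexpr) (l : seq minexpr) := foldr MMin t0 l.

Lemma meval_subst env s t :
  meval env (msubst s t) = meval (fun i => meval env (s i)) t.
Proof. by elim: t => //= [p -> q ->|p -> q ->|p ->|p -> q ->]. Qed.

Lemma eq_meval env env' t : env =1 env' -> meval env t = meval env' t.
Proof. by move=> h; elim: t => //= [p -> q ->|p -> q ->|p ->|p -> q ->]. Qed.

Lemma oppr_min_opp (x y : R) : - Num.min (- x) (- y) = Num.max x y.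
Proof. by rewrite -oppr_max !opprK. Qed.

Lemma meval_msum (I : finType) env (f : I -> minexpr) :
  meval env (msum [seq f i | i <- enum I]) = \sum_i meval env (f i).
Proof.
by rewrite -big_enum /=; elim: (enum I) => [|i l IH]; rewrite ?big_nil ?big_cons //= IH.
Qed.

Lemma meval_min_seq env t0 (l : seq minexpr) :
  meval env (mmin_seq t0 l) = foldr Num.min (meval env t0) [seq meval env t | t <- l].
Proof. by elim: l => //= t l ->. Qed.

Lemma coord_envE (m : nat) (x : 'rV[R]_m) j (j_lt : (j < m)%N) :
  coord_env x j = x 0 (Ordinal j_lt).
Proof.
rewrite /coord_env; case: ltnP => [?|j_ge]; first by congr (x 0 _); apply: val_inj.
by exfalso; move: j_lt; rewrite ltnNge j_ge.
Qed.

Lemma coord_env_ord (m : nat) (x : 'rV[R]_m) (j : 'I_m) : coord_env x j = x 0 j.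
Proof. by rewrite (coord_envE x (ltn_ord j)); congr (x 0 _); apply: val_inj. Qed.

Lemma coord_env_out (m : nat) (x : 'rV[R]_m) j : (m <= j)%N -> coord_env x j = 0.
Proof. by rewrite /coord_env; case: ltnP => // j_lt j_ge; move: j_lt; rewrite ltnNge j_ge. Qed.

End MinExpressions.

Section Continuity.
Variable R : rcfType.

Definition continuousR (n : nat) (f : 'rV[R]_n -> R) :=
  forall x e, 0 < e -> exists2 d, 0 < d &
    forall y, edist x y < d -> `|f x - f y| < e.

Lemma sum_sqr_le_sqr_sum (m : nat) (F : 'I_m -> R) :
  (forall i, 0 <= F i) -> \sum_i F i ^+ 2 <= (\sum_i F i) ^+ 2.
Proof.
elim: m F => [|m IH] F F_ge0; first by rewrite !big_ord0 expr0n.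
rewrite !big_ord_recr /=.
have := IH (fun i => F (widen_ord (leqnSn m) i)) (fun i => F_ge0 _).
have : 0 <= \sum_(i < m) F (widen_ord (leqnSn m) i) by apply: sumr_ge0.
have := F_ge0 ord_max.
set S := \sum_(i < m) _; set T := \sum_(i < m) _.
nra.
Qed.

Lemma mulr_self_ge0 (r : R) : 0 <= r * r.
Proof. by rewrite -expr2 sqr_ge0. Qed.

Lemma sum_sqr_eq0 (m : nat) (f : 'I_m -> R) :
  \sum_i f i * f i = 0 <-> forall i, f i = 0.
Proof.
split=> [sum0 i|f0]; last by rewrite big1 // => i _; rewrite f0 mulr0.
have := psumr_eq0P (fun j _ => mulr_self_ge0 (f j)) sum0 (i := i) erefl.
by move/eqP; rewrite mulf_eq0 orbb => /eqP.
Qed.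

Lemma edist_le_sum_norm (n : nat) (x y : 'rV[R]_n) :
  edist x y <= \sum_i `|x 0 i - y 0 i|.
Proof.
rewrite /edist -(@ger0_norm _ (\sum_i `|x 0 i - y 0 i|)) ?sumr_ge0 //.
rewrite -sqrtr_sqr ler_sqrt ?sqr_ge0 //.
rewrite (eq_bigr (fun i => `|x 0 i - y 0 i| ^+ 2)) => [|i _].
  exact: sum_sqr_le_sqr_sum.
by rewrite real_normK ?num_real.
Qed.

Lemma norm_coord_le_edist (n : nat) (x y : 'rV[R]_n) i :
  `|x 0 i - y 0 i| <= edist x y.
Proof.
rewrite /edist -sqrtr_sqr ler_sqrt ?sumr_ge0 // => [|j _]; last exact: sqr_ge0.
by rewrite (bigD1 i) //= lerDl sumr_ge0 // => j _; apply: sqr_ge0.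
Qed.

Lemma norm_coord_env_le_edist (n : nat) (x y : 'rV[R]_n) i :
  `|coord_env x i - coord_env y i| <= edist x y.
Proof.
rewrite /coord_env; case: ltnP => i_lt; first exact: norm_coord_le_edist.
by rewrite subrr normr0 sqrtr_ge0.
Qed.

Lemma normr_min_sub_lt (a b c d e : R) : `|a - c| < e -> `|b - d| < e ->
  `|Num.min a b - Num.min c d| < e.
Proof.
rewrite !ltr_norml => /andP[h1 h2] /andP[h3 h4].
by rewrite /Num.min; case: ifP => h5; case: ifP => h6; apply/andP; split; lra.
Qed.

Lemma normr_mul_sub_lt (a b c d e : R) : 0 < e ->
  `|a - c| < Num.min 1 (e / (2 * (1 + `|a| + `|b|))) ->
  `|b - d| < Num.min 1 (e / (2 * (1 + `|a| + `|b|))) ->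
  `|a * b - c * d| < e.
Proof.
set K := 1 + `|a| + `|b|; set e1 := Num.min 1 _ => e_gt0 ac bd.
have na := normr_ge0 a; have nb := normr_ge0 b.
have K_gt0 : 0 < K by rewrite /K; lra.
have e1_le1 : e1 <= 1 by rewrite ge_min lexx.
have e1K : e1 * (2 * K) <= e.
  by rewrite -ler_pdivlMr ?mulr_gt0 // ge_min lexx orbT.
have e1_gt0 : 0 < e1 by apply: le_lt_trans ac.
have -> : a * b - c * d = (a - c) * b + a * (b - d) - (a - c) * (b - d) by ring.
apply: le_lt_trans (ler_normB _ _) _.
apply: le_lt_trans (lerD (ler_normD _ _) (lexx _)) _.
rewrite !normrM.
have n1 := normr_ge0 (a - c); have n2 := normr_ge0 (b - d).
have : `|a - c| * `|b| <= e1 * `|b| by rewrite ler_wpM2r // ltW.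
have : `|a| * `|b - d| <= `|a| * e1 by rewrite ler_wpM2l // ltW.
have : `|a - c| * `|b - d| <= e1 * e1 by apply: ler_pM => //; apply: ltW.
have : e1 * e1 <= e1 by rewrite -[X in _ <= X]mulr1 ler_wpM2l // ltW.
rewrite /K in e1K; nra.
Qed.

Lemma continuousR_meval (n : nat) (t : minexpr R) :
  continuousR (fun x : 'rV[R]_n => meval (coord_env x) t).
Proof.
elim: t => [c|i|p IHp q IHq|p IHp q IHq|p IHp|p IHp q IHq] x e e_gt0 /=.
- by exists 1 => // y _; rewrite subrr normr0.
- by exists e => // y; apply: le_lt_trans (norm_coord_env_le_edist _ _ _).
- have e2_gt0 : 0 < e / 2 by rewrite divr_gt0.
  have [d1 d1_gt0 H1] := IHp x _ e2_gt0; have [d2 d2_gt0 H2] := IHq x _ e2_gt0.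
  exists (Num.min d1 d2) => [|y]; first by rewrite lt_min d1_gt0.
  rewrite lt_min => /andP[/H1 h1 /H2 h2]; rewrite opprD addrACA.
  by apply: le_lt_trans (ler_normD _ _) _; lra.
- set a := meval _ p; set b := meval _ q.
  pose e1 := Num.min 1 (e / (2 * (1 + `|a| + `|b|))).
  have e1_gt0 : 0 < e1.
    by rewrite lt_min ltr01 divr_gt0 ?mulr_gt0 ?ltr_wpDr ?normr_ge0 ?addr_ge0.
  have [d1 d1_gt0 H1] := IHp x _ e1_gt0; have [d2 d2_gt0 H2] := IHq x _ e1_gt0.
  exists (Num.min d1 d2) => [|y]; first by rewrite lt_min d1_gt0.
  by rewrite lt_min => /andP[/H1 h1 /H2 h2]; apply: normr_mul_sub_lt.
- have [d d_gt0 H] := IHp x e e_gt0; exists d => // y /H.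
  by rewrite -opprD normrN.
- have [d1 d1_gt0 H1] := IHp x e e_gt0; have [d2 d2_gt0 H2] := IHq x e e_gt0.
  exists (Num.min d1 d2) => [|y]; first by rewrite lt_min d1_gt0.
  by rewrite lt_min => /andP[/H1 h1 /H2 h2]; apply: normr_min_sub_lt.
Qed.

Lemma continuousR_common_delta (n m : nat) (f : 'I_m -> 'rV[R]_n -> R) x e :
  (forall i, continuousR (f i)) -> 0 < e ->
  exists2 d, 0 < d & forall y, edist x y < d -> forall i, `|f i x - f i y| < e.
Proof.
move=> f_cont e_gt0.
suff [d d_gt0 H] : exists2 d, 0 < d & forall y, edist x y < d ->
    forall i, i \in enum 'I_m -> `|f i x - f i y| < e.
  by exists d => // y /H H' i; rewrite H' ?mem_enum.
elim: (enum 'I_m) => [|i l [d d_gt0 H]]; first by exists 1.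
have [d1 d1_gt0 H1] := f_cont i x e e_gt0.
exists (Num.min d d1) => [|y]; first by rewrite lt_min d_gt0.
rewrite lt_min => /andP[/H H' /H1 H1'] j; rewrite inE.
by case/predU1P => [->|/H'].
Qed.

Lemma continuous_on_row_meval (n m : nat) (F : 'I_m -> minexpr R)
    (A : 'rV[R]_n -> Prop) :
  continuous_on A (fun x => \row_i meval (coord_env x) (F i)).
Proof.
move=> x _ e e_gt0.
have m_ge0 : (0 : R) <= m%:R by apply: ler0n.
set e' := e / (m%:R + 1).
have e'_gt0 : 0 < e' by rewrite divr_gt0 //; lra.
have e'm : e' * m%:R < e.
  have : e' * (m%:R + 1) = e by rewrite mulfVK //; apply/eqP; lra.
  lra.
have [d d_gt0 H] := continuousR_common_delta x (fun i => continuousR_meval (F i)) e'_gt0.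
exists d => // y _ /H xy; apply: le_lt_trans (edist_le_sum_norm _ _) _.
apply: le_lt_trans e'm; rewrite mulr_natr -[X in _ *+ X]card_ord -sumr_const.
by apply: ler_sum => i _; rewrite !mxE ltW.
Qed.

End Continuity.

Section ZeroSets.
Variable R : rcfType.

Lemma has_predI_all (T : Type) (P Q : pred T) (l : seq T) :
  all Q l -> has P l -> has (predI P Q) l.
Proof.
by elim: l => //= c l IH /andP[Qc Ql] /orP[Pc|/IH ->]; rewrite ?Pc ?Qc ?orbT.
Qed.

Lemma has_const (T : Type) (b : bool) (l : seq T) : has (fun=> b) l -> b.
Proof. by elim: l => //= _ l IH /orP[|/IH]. Qed.

Lemma has_flatten_allpairs (S T U : Type) (P : pred U) (Q1 : pred S) (Q2 : pred T)
    (g : S -> T -> seq U) (s : seq S) (t : seq T) :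
  has Q1 s -> has Q2 t -> (forall a b, Q1 a -> Q2 b -> has P (g a b)) ->
  has P (flatten [seq g a b | a <- s, b <- t]).
Proof.
move=> Q1s Q2t H; elim: s Q1s => //= a s IH.
rewrite flatten_cat has_cat => /orP[Q1a|/IH ->]; last by rewrite orbT.
apply/orP; left; elim: t Q2t {IH} => //= b t IH.
by rewrite has_cat => /orP[/(H _ _ Q1a) ->|/IH ->]; rewrite ?orbT.
Qed.

Lemma all_flatten_allpairs (S T U : Type) (P : pred U) (Q1 : pred S) (Q2 : pred T)
    (g : S -> T -> seq U) (s : seq S) (t : seq T) :
  all Q1 s -> all Q2 t -> (forall a b, Q1 a -> Q2 b -> all P (g a b)) ->
  all P (flatten [seq g a b | a <- s, b <- t]).
Proof.
move=> Q1s Q2t H; elim: s Q1s => //= a s IH /andP[Q1a /IH].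
rewrite flatten_cat all_cat => ->; rewrite andbT.
by elim: t Q2t {IH} => //= b t IH /andP[/(H _ _ Q1a) Pab /IH]; rewrite all_cat Pab.
Qed.

(* A cell pairs sign conditions, defining a basic semialgebraic set, with a
   polynomial. *)
Definition cell := (seq (pexpr R * bool) * pexpr R)%type.

Definition cell_holds (N : nat) (z : 'rV[R]_N) (c : cell) := all (atom_holds z) c.1.

Definition cell_decomposition (N : nat) (t : minexpr R) (L : seq cell) :=
  forall z : 'rV[R]_N, has (cell_holds z) L /\
    all (fun c => cell_holds z c ==> (meval (coord_env z) t == peval (coord_env z) c.2)) L.

Lemma cell_decomposition_binop (N : nat) (f : R -> R -> R) (t p q : minexpr R)
    (h : pexpr R -> pexpr R -> seq cell) L1 L2 :
  (forall env, meval env t = f (meval env p) (meval env q)) ->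
  (forall (z : 'rV[R]_N) u v, has (cell_holds z) (h u v)) ->
  (forall (z : 'rV[R]_N) u v, all (fun c => cell_holds z c ==>
     (f (peval (coord_env z) u) (peval (coord_env z) v) == peval (coord_env z) c.2))
     (h u v)) ->
  cell_decomposition N p L1 -> cell_decomposition N q L2 ->
  cell_decomposition N t (flatten [seq [seq (c1.1 ++ c2.1 ++ c.1, c.2) | c <- h c1.2 c2.2]
                                  | c1 <- L1, c2 <- L2]).
Proof.
move=> tE hcov hok dp dq z; have [pcov pok] := dp z; have [qcov qok] := dq z.
have cellE c1 c2 (c : cell) : cell_holds z (c1.1 ++ c2.1 ++ c.1, c.2) =
    [&& cell_holds z c1, cell_holds z c2 & cell_holds z c].
  by rewrite /cell_holds !all_cat.
split.
  apply: has_flatten_allpairs (has_predI_all pok pcov) (has_predI_all qok qcov) _.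
  move=> c1 c2 /andP[h1 _] /andP[h2 _]; rewrite has_map.
  by apply: sub_has (hcov z c1.2 c2.2) => c hc /=; rewrite cellE h1 h2.
apply: all_flatten_allpairs pok qok _ => c1 c2 ok1 ok2; rewrite all_map.
apply: sub_all (hok z c1.2 c2.2) => c /= /implyP okc.
apply/implyP; rewrite /= cellE => /and3P[h1 h2 hc].
by rewrite tE (eqP (implyP ok1 h1)) (eqP (implyP ok2 h2)) okc.
Qed.

Lemma minexpr_cell_decomposition (N : nat) (t : minexpr R) :
  exists L, cell_decomposition N t L.
Proof.
elim: t => [c|i|p [L1 d1] q [L2 d2]|p [L1 d1] q [L2 d2]|p [L1 d1]|p [L1 d1] q [L2 d2]].
- by exists [:: ([::], PConst c)] => z /=; rewrite eqxx.
- by exists [:: ([::], @PVar R i)] => z /=; rewrite eqxx.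
- by eexists; refine (@cell_decomposition_binop N +%R _ p q
    (fun u v => [:: ([::], PAdd u v)]) _ _ _ _ _ d1 d2); try move=> z u v /=; rewrite ?eqxx.
- by eexists; refine (@cell_decomposition_binop N *%R _ p q
    (fun u v => [:: ([::], PMul u v)]) _ _ _ _ _ d1 d2); try move=> z u v /=; rewrite ?eqxx.
- exists [seq (c.1, POpp c.2) | c <- L1] => z; have [cov ok] := d1 z.
  rewrite has_map all_map; split; first exact: cov.
  by apply: sub_all ok => c /implyP ok'; apply/implyP => /ok' /= /eqP ->.
- eexists; refine (@cell_decomposition_binop N Num.min _ p q (fun u v =>
    [:: ([:: (PAdd u (POpp v), true)], v); ([:: (PAdd u (POpp v), false)], u);
        ([:: (PAdd v (POpp u), true)], u)]) _ _ _ _ _ d1 d2) => //.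
    move=> z u v; rewrite /cell_holds /atom_holds /= !andbT.
    by rewrite !subr_gt0 subr_eq0; case: ltrgtP.
  move=> z u v; rewrite /cell_holds /atom_holds /= !andbT.
  rewrite !subr_gt0 subr_eq0; apply/and3P; split; apply/implyP.
  + by move=> yx; rewrite /Num.min ltNge (ltW yx).
  + by move/eqP ->; rewrite minxx.
  + by move=> xy; rewrite /Num.min xy.
Qed.

Lemma semialgebraic_meval_eq0 (N : nat) (t : minexpr R) :
  semialgebraic (fun z : 'rV[R]_N => meval (coord_env z) t = 0).
Proof.
have [L dL] := minexpr_cell_decomposition N t.
exists [seq c.1 ++ [:: (c.2, false)] | c <- L] => z; have [cov ok] := dL z.
rewrite has_map /preim /=; split => [t0|].
  apply: sub_has (has_predI_all ok cov) => c /andP[hc /implyP/(_ hc)/eqP tc].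
  rewrite /= all_cat /= andbT; apply/andP; split; first exact: hc.
  by rewrite /atom_holds /= -tc t0.
move=> /(has_predI_all ok) h0; apply/eqP/(has_const (l := L)); apply: sub_has h0 => c /=.
rewrite all_cat /= andbT => /andP[/andP[hc /eqP c0]] /implyP/(_ hc)/eqP ->.
by rewrite c0.
Qed.

End ZeroSets.

Section Simplices.
Variable R : rcfType.

Definition bary_unique (k n : nat) (V : 'M[R]_(k, n)) :=
  forall w w' : 'rV[R]_k, \sum_i w 0 i = \sum_i w' 0 i ->
    w *m V = w' *m V -> w = w'.

Lemma mulmx_const1 (k : nat) (w : 'rV[R]_k) j :
  (w *m (const_mx 1 : 'cV[R]_k)) 0 j = \sum_i w 0 i.
Proof. by rewrite !mxE; apply: eq_bigr => i _; rewrite mxE mulr1. Qed.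

Lemma sum_rowZ (k : nat) (c : R) (w : 'rV[R]_k) :
  \sum_j (c *: w) 0 j = c * \sum_j w 0 j.
Proof. by rewrite mulr_sumr; apply: eq_bigr => j _; rewrite mxE. Qed.

Lemma sum_rowD (k : nat) (w w' : 'rV[R]_k) :
  \sum_j (w + w') 0 j = \sum_j w 0 j + \sum_j w' 0 j.
Proof. by rewrite -big_split; apply: eq_bigr => j _; rewrite mxE. Qed.

Lemma sum_rowB (k : nat) (w w' : 'rV[R]_k) :
  \sum_j (w - w') 0 j = \sum_j w 0 j - \sum_j w' 0 j.
Proof. by rewrite -sumrB; apply: eq_bigr => j _; rewrite !mxE. Qed.

Lemma sum_delta_mx (k : nat) (j : 'I_k) : \sum_l (delta_mx 0 j : 'rV[R]_k) 0 l = 1.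
Proof.
by rewrite (bigD1 j) //= mxE !eqxx big1 ?addr0 // => l /negbTE jl; rewrite mxE jl andbF.
Qed.

Lemma aff_indep_bary_unique (k n : nat) (V : 'M[R]_(k, n)) :
  aff_indep V -> bary_unique V.
Proof.
move=> V_indep w w' sumE mulE; apply/eqP; rewrite -subr_eq0.
rewrite -(mulmx_free_eq0 _ V_indep) mul_mx_row mulmxBl mulE subrr.
apply/eqP/rowP => j; rewrite !mxE; case: splitP => l _; first by rewrite !mxE.
by rewrite mulmx_const1 sum_rowB sumE subrr.
Qed.

Lemma simplex_relint_simplex (k n : nat) (V : 'M[R]_(k, n)) x :
  simplex_relint V x -> simplex V x.
Proof. by case=> w [w_gt0 w1 ->]; exists w; split => // j; apply: ltW. Qed.

Lemma simplex_vertex (k n : nat) (V : 'M[R]_(k, n)) j : simplex V (row j V).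
Proof.
exists (delta_mx 0 j); rewrite sum_delta_mx -rowE; split=> // l.
by rewrite mxE ler0n.
Qed.

Lemma exists_lower_bound (T : eqType) (f : T -> R) (l : seq T) :
  (forall t, 0 < f t) -> exists2 e, 0 < e & forall t, t \in l -> e <= f t.
Proof.
move=> f_gt0; elim: l => [|t l [e e_gt0 H]]; first by exists 1.
exists (Num.min e (f t)) => [|u]; first by rewrite lt_min e_gt0 f_gt0.
by rewrite inE ge_min => /predU1P[->|/H ->]; rewrite ?lexx ?orbT.
Qed.

(* The relative interior is the set of points beyond which every segment from
   the simplex can be prolonged; this depends only on the point set. *)
Lemma simplex_relintP (k n : nat) (V : 'M[R]_(k, n)) x : bary_unique V ->
  simplex_relint V x <-> (simplex V x /\ forall p, simplex V p ->
     exists2 e, 0 < e & simplex V (x + e *: (x - p))).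
Proof.
move=> V_unique; split.
  case=> w [w_gt0 w1 xE]; split; first by apply: simplex_relint_simplex; exists w.
  move=> p [u [u_ge0 u1 ->]].
  have [e e_gt0 e_le] := exists_lower_bound (enum 'I_k) w_gt0.
  exists e => //; exists (w + e *: (w - u)); split.
  - move=> j; rewrite !mxE; have := e_le j (mem_enum _ _).
    have : u 0 j <= 1 by rewrite -u1 (bigD1 j) //= lerDl sumr_ge0.
    by have := w_gt0 j; have := u_ge0 j; nra.
  - by rewrite sum_rowD sum_rowZ sum_rowB w1 u1 subrr mulr0 addr0.
  - by rewrite xE mulmxDl -scalemxAl mulmxBl.
case=> [[w [w_ge0 w1 xE]] extend]; exists w; split => // j.
have [e e_gt0 [w' [w'_ge0 w'1 w'E]]] := extend _ (simplex_vertex V j).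
have e1_neq0 : 1 + e != 0 by rewrite gt_eqF // ltr_wpDr // ltW.
have := V_unique w ((1 + e)^-1 *: (w' + e *: delta_mx 0 j)).
rewrite sum_rowZ sum_rowD sum_rowZ w'1 sum_delta_mx w1 mulr1 mulVf // => /(_ erefl).
rewrite -scalemxAl mulmxDl -scalemxAl -rowE -w'E -xE.
have -> : (1 + e)^-1 *: (x + e *: (x - row j V) + e *: row j V) = x.
  by rewrite scalerBr -addrA addrNK -{1}(scale1r x) -scalerDl scalerA mulVf ?scale1r.
move=> /(_ erefl) ->; rewrite !mxE !eqxx mulr1.
by apply: mulr_gt0; [rewrite invr_gt0 | have := w'_ge0 j]; lra.
Qed.

Lemma simplex_relint_eq (k n m : nat) (V : 'M[R]_(k, n)) (W : 'M[R]_(m, n)) :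
  bary_unique V -> bary_unique W -> (forall x, simplex V x <-> simplex W x) ->
  forall x, simplex_relint V x <-> simplex_relint W x.
Proof.
move=> V_unique W_unique VW x; rewrite simplex_relintP // simplex_relintP //.
by split=> -[/VW x_in ext]; split=> // p /VW /ext [e e_gt0 /VW]; exists e.
Qed.

End Simplices.

Section Facets.
Variables (R : rcfType) (k n : nat).
Implicit Types (V W : 'M[R]_(k.+1, n)) (w : 'rV[R]_k.+1).

Definition insert0 (i : 'I_k.+1) (u : 'rV[R]_k) : 'rV[R]_k.+1 :=
  \row_j (if unlift i j is Some l then u 0 l else 0).

Lemma insert0_id i u : insert0 i u 0 i = 0.
Proof. by rewrite mxE unlift_none. Qed.

Lemma insert0_lift i u l : insert0 i u 0 (lift i l) = u 0 l.
Proof. by rewrite mxE liftK. Qed.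

Lemma sum_insert0 i u : \sum_j insert0 i u 0 j = \sum_l u 0 l.
Proof.
by rewrite (bigD1_ord i) //= insert0_id add0r; apply: eq_bigr => l _; rewrite insert0_lift.
Qed.

Lemma insert0_mulmx V i u : insert0 i u *m V = u *m row' i V.
Proof.
rewrite !mulmx_sum_row (bigD1_ord i) //= insert0_id scale0r add0r.
by apply: eq_bigr => l _; rewrite insert0_lift; congr (_ *: _); apply/rowP => j; rewrite !mxE.
Qed.

Lemma insert0_col' i w : w 0 i = 0 -> insert0 i (col' i w) = w.
Proof.
move=> wi0; apply/rowP => j; rewrite mxE; case: (unliftP i j) => [l ->|->] //.
by rewrite mxE.
Qed.

Lemma facetP V i x : simplex (row' i V) x <->
  exists w, [/\ w 0 i = 0, forall j, 0 <= w 0 j, \sum_j w 0 j = 1 & x = w *m V].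
Proof.
split=> [[u [u_ge0 u1 ->]]|[w [wi0 w_ge0 w1 ->]]].
  exists (insert0 i u); rewrite insert0_id sum_insert0 insert0_mulmx; split=> // j.
  by rewrite mxE; case: unlift.
exists (col' i w); rewrite -(sum_insert0 i) -(insert0_mulmx V i) insert0_col' //.
by split=> // l; rewrite mxE.
Qed.

Lemma facet_relintP V i x : simplex_relint (row' i V) x <->
  exists w, [/\ w 0 i = 0, forall j, j != i -> 0 < w 0 j, \sum_j w 0 j = 1 &
              x = w *m V].
Proof.
split=> [[u [u_gt0 u1 ->]]|[w [wi0 w_gt0 w1 ->]]].
  exists (insert0 i u); rewrite insert0_id sum_insert0 insert0_mulmx; split=> // j.
  by case: (unliftP i j) => [l ->|->]; rewrite ?eqxx // insert0_lift.
exists (col' i w); rewrite -(sum_insert0 i) -(insert0_mulmx V i) insert0_col' //.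
by split=> // l; rewrite mxE w_gt0 // eq_sym neq_lift.
Qed.

Lemma facet_bary_unique V i : bary_unique V -> bary_unique (row' i V).
Proof.
move=> V_unique u u' sumE mulE; apply/rowP => l; rewrite -!(insert0_lift i).
by rewrite (V_unique (insert0 i u) (insert0 i u')) ?sum_insert0 ?insert0_mulmx.
Qed.

(* A weight supported on a facet, with arbitrary nonnegative total mass, is
   rescaled to a point of the facet, moved to the other facet, and scaled back. *)
Lemma facet_weight_transfer V W i j :
  (forall x, simplex (row' i V) x -> simplex (row' j W) x) ->
  forall w, w 0 i = 0 -> (forall l, 0 <= w 0 l) ->
  exists w', [/\ w' 0 j = 0, forall l, 0 <= w' 0 l,
                 \sum_l w' 0 l = \sum_l w 0 l & w *m V = w' *m W].
Proof.
move=> VW w wi0 w_ge0; have : 0 <= \sum_l w 0 l by apply: sumr_ge0.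
set c := \sum_l w 0 l; rewrite le0r => /predU1P[c0|c_gt0].
  exists 0; split=> [|l||]; rewrite ?mxE //.
    by rewrite c0 big1 // => l _; rewrite mxE.
  suff -> : w = 0 by rewrite !mul0mx.
  by apply/rowP => l; rewrite mxE; apply: (psumr_eq0P (fun l _ => w_ge0 l) c0).
have c_neq0 : c != 0 by rewrite gt_eqF.
have /VW/facetP [w' [w'j0 w'_ge0 w'1 w'E]] : simplex (row' i V) ((c^-1 *: w) *m V).
  apply/facetP; exists (c^-1 *: w); split=> [|l||] //; rewrite ?sum_rowZ ?mulVf //.
    by rewrite mxE wi0 mulr0.
  by rewrite mxE mulr_ge0 // invr_ge0 ltW.
exists (c *: w'); split=> [|l||]; rewrite ?sum_rowZ ?w'1 ?mulr1 //.
- by rewrite mxE w'j0 mulr0.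
- by rewrite mxE mulr_ge0 // ltW.
- by rewrite -scalemxAl -w'E -scalemxAl scalerA mulfV ?scale1r.
Qed.

Lemma facet_relint_weight_transfer V W i j : (0 < k)%N ->
  (forall x, simplex_relint (row' i V) x -> simplex_relint (row' j W) x) ->
  forall w, w 0 i = 0 -> (forall l, l != i -> 0 < w 0 l) ->
  exists w', [/\ w' 0 j = 0, forall l, l != j -> 0 < w' 0 l,
                 \sum_l w' 0 l = \sum_l w 0 l & w *m V = w' *m W].
Proof.
move=> k_gt0 VW w wi0 w_gt0; set c := \sum_l w 0 l.
have c_gt0 : 0 < c.
  rewrite /c (bigD1_ord i) //= wi0 add0r (bigD1 (Ordinal k_gt0)) //=.
  apply: ltr_pwDl; first by rewrite w_gt0 // eq_sym neq_lift.
  by apply: sumr_ge0 => l _; rewrite ltW // w_gt0 // eq_sym neq_lift.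
have c_neq0 : c != 0 by rewrite gt_eqF.
have /VW/facet_relintP [w' [w'j0 w'_gt0 w'1 w'E]] :
    simplex_relint (row' i V) ((c^-1 *: w) *m V).
  apply/facet_relintP; exists (c^-1 *: w); split=> [|l li||] //; rewrite ?sum_rowZ ?mulVf //.
    by rewrite mxE wi0 mulr0.
  by rewrite mxE mulr_gt0 ?invr_gt0 ?w_gt0.
exists (c *: w'); split=> [|l lj||]; rewrite ?sum_rowZ ?w'1 ?mulr1 //.
- by rewrite mxE w'j0 mulr0.
- by rewrite mxE mulr_gt0 ?w'_gt0.
- by rewrite -scalemxAl -w'E -scalemxAl scalerA mulfV ?scale1r.
Qed.

End Facets.

Section Gluing.
Variables (R : rcfType) (n : nat).
Hypothesis n_gt0 : (0 < n)%N.
Variables V1 V2 : 'M[R]_(n.+1, n).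
Hypotheses (V1_indep : aff_indep V1) (V2_indep : aff_indep V2).
Variables i1 i2 : 'I_n.+1.
Hypothesis tau_common : forall x, simplex (facet_vertices V1 i1) x <->
                                  simplex (facet_vertices V2 i2) x.
Hypothesis sigma_cap : forall x, (simplex V1 x /\ simplex V2 x) <->
                                 simplex (facet_vertices V2 i2) x.

Local Notation a := i2.
Local Notation nR := (n%:R : R).
Implicit Types (l e : 'rV[R]_n.+1) (x : 'rV[R]_n).

Lemma nR_gt0 : 0 < nR. Proof. by rewrite ltr0n. Qed.
Lemma nR_neq0 : nR != 0. Proof. by rewrite gt_eqF // nR_gt0. Qed.

Lemma sum_off (F : 'I_n.+1 -> R) : \sum_k F k = F a + \sum_(l < n) F (lift a l).
Proof. by rewrite (bigD1_ord a). Qed.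

Lemma sumr_const_n (c : R) : \sum_(l < n) c = nR * c.
Proof. by rewrite sumr_const card_ord mulr_natl. Qed.

Lemma V1_bary_unique : bary_unique V1. Proof. exact: aff_indep_bary_unique. Qed.
Lemma V2_bary_unique : bary_unique V2. Proof. exact: aff_indep_bary_unique. Qed.

(* [locked] keeps [mxE] from expanding [pinvmx]; the same holds for [apex]. *)
Definition bary_mx := locked (pinvmx (row_mx V2 (const_mx 1 : 'cV[R]_n.+1))).
Definition bary (x : 'rV[R]_n) : 'rV[R]_n.+1 := row_mx x (1 : 'rV[R]_1) *m bary_mx.

Lemma baryP x : bary x *m V2 = x /\ \sum_k bary x 0 k = 1.
Proof.
have full : row_full (row_mx V2 (const_mx 1 : 'cV[R]_n.+1)).
  by rewrite /row_full (eqP V2_indep) addn1.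
have : bary x *m row_mx V2 (const_mx 1) = row_mx x 1.
  by rewrite /bary /bary_mx -lock; exact: mulmxKpV (submx_full _ full).
rewrite mul_mx_row => /eq_row_mx[-> sum1]; split=> //.
by rewrite -(mulmx_const1 (bary x) 0) sum1 mxE.
Qed.

Lemma baryK x : bary x *m V2 = x. Proof. by case: (baryP x). Qed.
Lemma sum_bary x : \sum_k bary x 0 k = 1. Proof. by case: (baryP x). Qed.

Lemma bary_mulmx (w : 'rV[R]_n.+1) : \sum_k w 0 k = 1 -> bary (w *m V2) = w.
Proof. by move=> w1; apply: V2_bary_unique; rewrite ?baryK // sum_bary w1. Qed.

Lemma sigma2_baryP x : simplex V2 x <-> forall k, 0 <= bary x 0 k.
Proof.
split=> [[w [w_ge0 w1 ->]]|bx_ge0]; first by rewrite bary_mulmx.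
by exists (bary x); rewrite sum_bary baryK.
Qed.

Lemma relint2_baryP x : simplex_relint V2 x <-> forall k, 0 < bary x 0 k.
Proof.
split=> [[w [w_gt0 w1 ->]]|bx_gt0]; first by rewrite bary_mulmx.
by exists (bary x); rewrite sum_bary baryK.
Qed.

Lemma tau_baryP x : simplex (facet_vertices V2 a) x <->
  bary x 0 a = 0 /\ forall k, 0 <= bary x 0 k.
Proof.
rewrite facetP; split=> [[w [wa0 w_ge0 w1 ->]]|[bxa0 bx_ge0]]; first by rewrite bary_mulmx.
by exists (bary x); rewrite sum_bary baryK.
Qed.

Lemma tau_relint_baryP x : simplex_relint (facet_vertices V2 a) x <->
  bary x 0 a = 0 /\ forall k, k != a -> 0 < bary x 0 k.
Proof.
rewrite facet_relintP; split=> [[w [wa0 w_gt0 w1 ->]]|[bxa0 bx_gt0]].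
  by rewrite bary_mulmx.
by exists (bary x); rewrite sum_bary baryK.
Qed.

Definition apex := locked (bary (row i1 V1)).

Lemma sum_apex : \sum_k apex 0 k = 1.
Proof. by rewrite /apex -lock sum_bary. Qed.

Lemma apexK : apex *m V2 = row i1 V1.
Proof. by rewrite /apex -lock baryK. Qed.

Lemma sum_apex_comb (w : 'rV[R]_n.+1) s :
  \sum_k (w + s *: apex) 0 k = \sum_k w 0 k + s.
Proof. by rewrite sum_rowD sum_rowZ sum_apex mulr1. Qed.

Definition in_sigma1 (e : 'rV[R]_n.+1) := exists s (w : 'rV[R]_n.+1),
  [/\ 0 <= s, w 0 a = 0, forall k, 0 <= w 0 k, \sum_k w 0 k = 1 - s &
      e = w + s *: apex].

Definition in_relint1 (e : 'rV[R]_n.+1) := exists s (w : 'rV[R]_n.+1),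
  [/\ 0 < s, w 0 a = 0, forall k, k != a -> 0 < w 0 k, \sum_k w 0 k = 1 - s &
      e = w + s *: apex].

Definition facet_part (i : 'I_n.+1) (w : 'rV[R]_n.+1) := w - w 0 i *: delta_mx 0 i.

Lemma facet_part_id i w : facet_part i w 0 i = 0.
Proof. by rewrite !mxE !eqxx mulr1 subrr. Qed.

Lemma facet_part_neq i w j : j != i -> facet_part i w 0 j = w 0 j.
Proof. by move=> /negbTE ji; rewrite !mxE ji andbF mulr0 subr0. Qed.

Lemma sum_facet_part i w : \sum_k facet_part i w 0 k = \sum_k w 0 k - w 0 i.
Proof. by rewrite sum_rowB sum_rowZ sum_delta_mx mulr1. Qed.

Lemma facet_part_mulmx i w (V : 'M[R]_(n.+1, n)) :
  w *m V = facet_part i w *m V + w 0 i *: row i V.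
Proof. by rewrite mulmxBl -scalemxAl -rowE subrK. Qed.

Lemma sigma1_baryP y : simplex V1 y <-> in_sigma1 (bary y).
Proof.
have [tau12 tau21] : (forall x, simplex (row' i1 V1) x -> simplex (row' a V2) x) /\
                     (forall x, simplex (row' a V2) x -> simplex (row' i1 V1) x).
  by split=> x /tau_common.
split=> [[w [w_ge0 w1 ->]]|[s [w [s_ge0 wa0 w_ge0 w1 bE]]]].
  have [|w' [w'a0 w'_ge0 w'1 w'E]] := facet_weight_transfer tau12 (facet_part_id i1 w).
    by move=> k; case: (eqVneq k i1) => [->|ki]; rewrite ?facet_part_id ?facet_part_neq.
  exists (w 0 i1), w'; rewrite w'1 sum_facet_part w1; split=> //.
  apply: V2_bary_unique; first by rewrite sum_bary sum_apex_comb w'1 sum_facet_part w1 subrK.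
  by rewrite baryK mulmxDl -scalemxAl apexK -w'E -facet_part_mulmx.
have [w' [w'i0 w'_ge0 w'1 w'E]] := facet_weight_transfer tau21 wa0 w_ge0.
exists (w' + s *: delta_mx 0 i1); split.
- by move=> k; rewrite !mxE addr_ge0 ?mulr_ge0 ?ler0n.
- by rewrite sum_rowD sum_rowZ sum_delta_mx w'1 w1 mulr1 subrK.
- by rewrite -[y]baryK bE mulmxDl -scalemxAl apexK w'E mulmxDl -scalemxAl -rowE.
Qed.

Lemma tau_relint_common x :
  simplex_relint (row' i1 V1) x <-> simplex_relint (row' a V2) x.
Proof.
apply: simplex_relint_eq; last exact: tau_common.
  exact: facet_bary_unique V1_bary_unique.
exact: facet_bary_unique V2_bary_unique.
Qed.

Lemma relint1_baryP y : simplex_relint V1 y <-> in_relint1 (bary y).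
Proof.
have [tau12 tau21] :
    (forall x, simplex_relint (row' i1 V1) x -> simplex_relint (row' a V2) x) /\
    (forall x, simplex_relint (row' a V2) x -> simplex_relint (row' i1 V1) x).
  by split=> x /tau_relint_common.
split=> [[w [w_gt0 w1 ->]]|[s [w [s_gt0 wa0 w_gt0 w1 bE]]]].
  have [|w' [w'a0 w'_gt0 w'1 w'E]] :=
    facet_relint_weight_transfer n_gt0 tau12 (facet_part_id i1 w).
    by move=> k ki; rewrite facet_part_neq.
  exists (w 0 i1), w'; rewrite w'1 sum_facet_part w1; split=> //.
  apply: V2_bary_unique; first by rewrite sum_bary sum_apex_comb w'1 sum_facet_part w1 subrK.
  by rewrite baryK mulmxDl -scalemxAl apexK -w'E -facet_part_mulmx.
have [w' [w'i0 w'_gt0 w'1 w'E]] := facet_relint_weight_transfer n_gt0 tau21 wa0 w_gt0.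
exists (w' + s *: delta_mx 0 i1); split.
- move=> k; rewrite !mxE; case: (eqVneq k i1) => [->|ki]; first by rewrite w'i0 add0r mulr1.
  by rewrite mulr0 addr0 w'_gt0.
- by rewrite sum_rowD sum_rowZ sum_delta_mx w'1 w1 mulr1 subrK.
- by rewrite -[y]baryK bE mulmxDl -scalemxAl apexK w'E mulmxDl -scalemxAl -rowE.
Qed.

Lemma tau_offset_notin x t : simplex (facet_vertices V2 a) x -> 0 < t ->
  ~ simplex (facet_vertices V1 i1) ((1 - t) *: x + t *: row i1 V1).
Proof.
move=> /tau_common /facetP [c [ci0 c_ge0 c1 ->]] t_gt0 /facetP [w [wi0 _ w1 wE]].
have := @V1_bary_unique w ((1 - t) *: c + t *: delta_mx 0 i1).
rewrite sum_rowD !sum_rowZ c1 sum_delta_mx w1 !mulr1 subrK => /(_ erefl).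
rewrite -wE mulmxDl -!scalemxAl -rowE => /(_ erefl) /rowP /(_ i1).
by rewrite !mxE wi0 ci0 !eqxx mulr0 add0r mulr1 => t0; move: t_gt0; rewrite -t0 ltxx.
Qed.

Definition tau_barycentre : 'rV[R]_n.+1 := \row_k (if k == a then 0 else nR^-1).

Lemma sum_tau_barycentre : \sum_k tau_barycentre 0 k = 1.
Proof.
rewrite sum_off mxE eqxx add0r (eq_bigr (fun _ => nR^-1)) => [|l _].
  by rewrite sumr_const_n mulfV ?nR_neq0.
by rewrite mxE lift_eqF.
Qed.

Lemma tau_barycentre_ge0 k : 0 <= tau_barycentre 0 k.
Proof. by rewrite mxE; case: eqP => // _; rewrite invr_ge0 ler0n. Qed.

(* Otherwise the points (1 - t) c + t v, for c the barycentre of tau, v the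
   apex and t > 0 small, would lie in sigma_1 and in sigma_2 but not in tau. *)
Lemma apex_a_lt0 : apex 0 a < 0.
Proof.
rewrite ltNge; apply/negP => apex_a_ge0.
set S := \sum_k `|apex 0 k|.
have S_ge0 : 0 <= S by apply: sumr_ge0.
have nS_gt0 : 0 < 1 + nR * S by have := nR_gt0; nra.
set t := (1 + nR * S)^-1.
have t_gt0 : 0 < t by rewrite invr_gt0.
have tnS : t * (1 + nR * S) = 1 by rewrite mulVf // gt_eqF.
have tS : (1 - t) * nR^-1 = t * S.
  by apply: (mulIf nR_neq0); rewrite mulfVK ?nR_neq0 //; lra.
have t_le1 : t <= 1 by have := mulr_ge0 (ltW nR_gt0) S_ge0; nra.
set p := ((1 - t) *: tau_barycentre + t *: apex) *m V2.
have bary_p : bary p = (1 - t) *: tau_barycentre + t *: apex.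
  by rewrite bary_mulmx // sum_apex_comb sum_rowZ sum_tau_barycentre mulr1 subrK.
have p_sigma2 : simplex V2 p.
  apply/sigma2_baryP => k; rewrite bary_p !mxE; case: eqP => [->|_].
    by rewrite mulr0 add0r mulr_ge0 // ltW.
  have : `|apex 0 k| <= S by rewrite /S (bigD1 k) //= lerDl sumr_ge0.
  have : - `|apex 0 k| <= apex 0 k by rewrite lerNnormlW.
  rewrite tS; nra.
have p_sigma1 : simplex V1 p.
  apply/sigma1_baryP; exists t, ((1 - t) *: tau_barycentre); split=> //.
  - exact: ltW.
  - by rewrite !mxE eqxx mulr0.
  - by move=> k; rewrite mxE mulr_ge0 ?tau_barycentre_ge0 ?subr_ge0.
  - by rewrite sum_rowZ sum_tau_barycentre mulr1.
have c_tau : simplex (facet_vertices V2 a) (tau_barycentre *m V2).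
  apply/tau_baryP; rewrite bary_mulmx ?sum_tau_barycentre // mxE eqxx.
  by split=> // k; apply: tau_barycentre_ge0.
have /tau_common := proj1 (sigma_cap p) (conj p_sigma1 p_sigma2).
by rewrite /p mulmxDl -!scalemxAl apexK; apply: tau_offset_notin c_tau t_gt0.
Qed.

Lemma apex_a_neq0 : apex 0 a != 0. Proof. by rewrite lt_eqF ?apex_a_lt0. Qed.

Definition off_a := lift a (Ordinal n_gt0).

Lemma off_a_neq : off_a != a. Proof. by rewrite eq_sym neq_lift. Qed.

Definition min_off (f : 'I_n.+1 -> R) := \big[Num.min/f off_a]_(j | j != a) f j.

Lemma min_off_le f j : j != a -> min_off f <= f j.
Proof. exact: (bigmin_le_cond _ (P := fun j => j != a)). Qed.

Lemma min_off_attained f : exists2 j, j != a & min_off f = f j.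
Proof.
case: (@arg_minP _ _ _ off_a (fun j => j != a) f off_a_neq) => j ja j_min.
exists j => //; apply/le_anti; rewrite min_off_le //=.
by apply: le_bigmin => [|k]; [apply: j_min off_a_neq | apply: j_min].
Qed.

Lemma eq_min_off f g : (forall j, j != a -> f j = g j) -> min_off f = min_off g.
Proof. by move=> fg; rewrite /min_off fg ?off_a_neq //; apply: eq_bigr. Qed.

Lemma min_offDr f c : min_off (fun j => f j + c) = min_off f + c.
Proof.
apply/le_anti/andP; split.
  by have [j ja ->] := min_off_attained f; apply: (min_off_le (fun j => f j + c)).
by have [j ja ->] := min_off_attained (fun j => f j + c); rewrite lerD2r min_off_le.
Qed.

Lemma min_off_ge0 f : (forall j, j != a -> 0 <= f j) -> 0 <= min_off f.
Proof. by move=> f_ge0; have [j ja ->] := min_off_attained f; apply: f_ge0. Qed.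

Lemma min_off_gt0 f : (forall j, j != a -> 0 < f j) -> 0 < min_off f.
Proof. by move=> f_gt0; have [j ja ->] := min_off_attained f; apply: f_gt0. Qed.

Local Ltac field_n := field; rewrite ?pnatr_eq0 -?lt0n ?n_gt0 //.

Definition mu (l : 'rV[R]_n.+1) := min_off (fun j => l 0 j).

Definition gap (l : 'rV[R]_n.+1) := l 0 a - nR * mu l.

Definition psi_bary (l : 'rV[R]_n.+1) : 'rV[R]_n.+1 := \row_k
  if k == a then Num.max (gap l) 0 + Num.max (- gap l) 0 * apex 0 a
  else l 0 k - mu l + 2 / nR * Num.min (l 0 a) (nR * mu l)
       + Num.max (- gap l) 0 * apex 0 k.

Definition apex_weight (e : 'rV[R]_n.+1) := Num.max (e 0 a / apex 0 a) 0.

Definition tau_part (e : 'rV[R]_n.+1) j := e 0 j - apex_weight e * apex 0 j.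

Definition mu_inv (e : 'rV[R]_n.+1) := min_off (tau_part e).

Definition psi_inv_bary (e : 'rV[R]_n.+1) : 'rV[R]_n.+1 := \row_k
  if k == a then Num.max (e 0 a) 0 + nR * mu_inv e / 2
  else tau_part e k - mu_inv e / 2 + apex_weight e / nR.

Lemma psi_bary_gap_ge0 l : 0 <= gap l ->
  psi_bary l 0 a = gap l /\ forall j, j != a -> psi_bary l 0 j = l 0 j + mu l.
Proof.
move=> gap_ge0; have gap_min : Num.min (l 0 a) (nR * mu l) = nR * mu l.
  by apply/min_idPr; move: gap_ge0; rewrite subr_ge0.
have max0 : Num.max (- gap l) 0 = 0 by apply/max_idPr; rewrite oppr_le0.
rewrite mxE eqxx (max_idPl gap_ge0) max0 mul0r addr0.
split=> // j /negbTE ja; rewrite mxE ja gap_min max0 mul0r addr0; field_n.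
Qed.

Lemma psi_bary_gap_lt0 l : gap l < 0 -> psi_bary l 0 a = - gap l * apex 0 a /\
  forall j, j != a -> psi_bary l 0 j = l 0 j - mu l + 2 / nR * l 0 a - gap l * apex 0 j.
Proof.
move=> gap_lt0; have gap_min : Num.min (l 0 a) (nR * mu l) = l 0 a.
  by apply/min_idPl; apply: ltW; move: gap_lt0; rewrite subr_lt0.
have maxN : Num.max (- gap l) 0 = - gap l by apply/max_idPl; rewrite oppr_ge0 ltW.
rewrite mxE eqxx (max_idPr (ltW gap_lt0)) maxN add0r.
by split=> // j /negbTE ja; rewrite mxE ja gap_min maxN mulNr.
Qed.

Lemma apex_weight_ea_ge0 e : 0 <= e 0 a -> apex_weight e = 0.
Proof.
move=> ea_ge0; apply/max_idPr.
by rewrite mulr_ge0_le0 // invr_le0 ltW ?apex_a_lt0.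
Qed.

Lemma apex_weight_ea_lt0 e : e 0 a < 0 ->
  0 < apex_weight e /\ apex_weight e * apex 0 a = e 0 a.
Proof.
move=> ea_lt0; have w_gt0 : 0 < e 0 a / apex 0 a.
  by rewrite nmulr_rgt0 // invr_lt0 apex_a_lt0.
rewrite /apex_weight (max_idPl (ltW w_gt0)); split=> //.
by rewrite mulfVK // apex_a_neq0.
Qed.

Lemma psi_inv_bary_ea_ge0 e : 0 <= e 0 a ->
  psi_inv_bary e 0 a = e 0 a + nR * mu_inv e / 2 /\ forall j, j != a ->
  psi_inv_bary e 0 j = e 0 j - mu_inv e / 2.
Proof.
move=> ea_ge0; rewrite mxE eqxx (max_idPl ea_ge0); split=> // j /negbTE ja.
by rewrite mxE ja /tau_part apex_weight_ea_ge0 // !mul0r subr0 addr0.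
Qed.

Lemma psi_inv_bary_ea_lt0 e : e 0 a < 0 ->
  psi_inv_bary e 0 a = nR * mu_inv e / 2 /\ forall j, j != a ->
  psi_inv_bary e 0 j = tau_part e j - mu_inv e / 2 + apex_weight e / nR.
Proof.
move=> ea_lt0; rewrite mxE eqxx (max_idPr (ltW ea_lt0)) add0r; split=> // j /negbTE ja.
by rewrite mxE ja.
Qed.

Lemma psi_baryK : cancel psi_bary psi_inv_bary.
Proof.
move=> l; apply/rowP => k; set e := psi_bary l.
case: (leP 0 (gap l)) => [gap_ge0|gap_lt0].
  have [ea ej] := psi_bary_gap_ge0 gap_ge0.
  have ea_ge0 : 0 <= e 0 a by rewrite ea.
  have [ia ij] := psi_inv_bary_ea_ge0 ea_ge0.
  have mu_invE : mu_inv e = mu l + mu l.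
    rewrite /mu_inv (@eq_min_off _ (fun j => l 0 j + mu l)) ?min_offDr // => j ja.
    by rewrite /tau_part apex_weight_ea_ge0 ?ea // mul0r subr0 ej.
  case: (eqVneq k a) => [->|ka]; first by rewrite ia ea mu_invE /gap; field_n.
  by rewrite ij // ej // mu_invE; field_n.
have [ea ej] := psi_bary_gap_lt0 gap_lt0.
have ea_lt0 : e 0 a < 0 by rewrite ea pmulr_rlt0 ?apex_a_lt0 // oppr_gt0.
have [ia ij] := psi_inv_bary_ea_lt0 ea_lt0.
have weightE : apex_weight e = - gap l.
  have [_] := apex_weight_ea_lt0 ea_lt0; rewrite ea.
  exact: (mulIf apex_a_neq0).
have tauE j : j != a -> tau_part e j = l 0 j + (- mu l + 2 / nR * l 0 a).
  by move=> ja; rewrite /tau_part weightE ej //; ring.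
have mu_invE : mu_inv e = 2 / nR * l 0 a.
  by rewrite /mu_inv (eq_min_off tauE) min_offDr -/(mu l) addNKr.
case: (eqVneq k a) => [->|ka]; first by rewrite ia mu_invE; field_n.
by rewrite ij // tauE // mu_invE weightE /gap; field_n.
Qed.

Lemma psi_inv_baryK : cancel psi_inv_bary psi_bary.
Proof.
move=> e; apply/rowP => k; set l := psi_inv_bary e.
have muE : mu l = mu_inv e - mu_inv e / 2 + apex_weight e / nR.
  rewrite /mu (@eq_min_off _ (fun j => tau_part e j + (- (mu_inv e / 2) + apex_weight e / nR))).
    by rewrite min_offDr addrA.
  move=> j /negbTE ja; rewrite mxE ja; ring.
case: (leP 0 (e 0 a)) => [ea_ge0|ea_lt0].
  have [la lj] := psi_inv_bary_ea_ge0 ea_ge0.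
  have weight0 := apex_weight_ea_ge0 ea_ge0.
  have gapE : gap l = e 0 a by rewrite /gap la muE weight0; field_n.
  have gap_ge0 : 0 <= gap l by rewrite gapE.
  have [pa pj] := psi_bary_gap_ge0 gap_ge0.
  case: (eqVneq k a) => [->|ka]; first by rewrite pa gapE.
  by rewrite pj // lj // muE weight0; field_n.
have [la lj] := psi_inv_bary_ea_lt0 ea_lt0.
have [weight_gt0 weightE] := apex_weight_ea_lt0 ea_lt0.
have gapE : gap l = - apex_weight e by rewrite /gap la muE; field_n.
have gap_lt0 : gap l < 0 by rewrite gapE oppr_lt0.
have [pa pj] := psi_bary_gap_lt0 gap_lt0.
case: (eqVneq k a) => [->|ka]; first by rewrite pa gapE opprK.
by rewrite pj // lj // muE la gapE /tau_part; field_n.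
Qed.

Lemma sum_psi_bary l : \sum_k psi_bary l 0 k = \sum_k l 0 k.
Proof.
rewrite !sum_off.
have lift_neq i : lift a i != a by rewrite eq_sym neq_lift.
have apex_off : \sum_(i < n) apex 0 (lift a i) = 1 - apex 0 a.
  by rewrite -sum_apex sum_off addrC addKr.
case: (leP 0 (gap l)) => [gap_ge0|gap_lt0].
  have [pa pj] := psi_bary_gap_ge0 gap_ge0.
  rewrite pa (eq_bigr _ (fun i _ => pj _ (lift_neq i))) big_split /= sumr_const_n /gap.
  ring.
have [pa pj] := psi_bary_gap_lt0 gap_lt0.
rewrite pa (eq_bigr _ (fun i _ => pj _ (lift_neq i))) !big_split /= !sumr_const_n.
rewrite sumrN -mulr_sumr apex_off /gap; field_n.
Qed.

Lemma sum_psi_inv_bary e : \sum_k psi_inv_bary e 0 k = \sum_k e 0 k.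
Proof. by rewrite -[in RHS](psi_inv_baryK e) sum_psi_bary. Qed.

Definition mcoord (j : 'I_n.+1) : minexpr R := MVar R j.

Definition mmin_off (F : 'I_n.+1 -> minexpr R) :=
  mmin_seq (F off_a) [seq F j | j <- enum 'I_n.+1 & j != a].

Lemma meval_mmin_off env F :
  meval env (mmin_off F) = min_off (fun j => meval env (F j)).
Proof.
by rewrite meval_min_seq -map_comp foldrE big_map big_filter big_enum_cond.
Qed.

Definition mu_expr := mmin_off mcoord.

Definition gap_expr := MAdd (mcoord a) (MOpp (MMul (MConst nR) mu_expr)).

Definition psi_expr (k : 'I_n.+1) :=
  let excess := MMax (MOpp gap_expr) (MConst 0) in
  if k == a then MAdd (MMax gap_expr (MConst 0)) (MMul excess (MConst (apex 0 a)))
  else MAdd (MAdd (MAdd (mcoord k) (MOpp mu_expr))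
                  (MMul (MConst (2 / nR)) (MMin (mcoord a) (MMul (MConst nR) mu_expr))))
            (MMul excess (MConst (apex 0 k))).

Definition apex_weight_expr :=
  MMax (MMul (mcoord a) (MConst (apex 0 a)^-1)) (MConst 0).

Definition tau_part_expr (j : 'I_n.+1) :=
  MAdd (mcoord j) (MOpp (MMul apex_weight_expr (MConst (apex 0 j)))).

Definition psi_inv_expr (k : 'I_n.+1) :=
  if k == a then
    MAdd (MMax (mcoord a) (MConst 0))
         (MMul (MMul (MConst nR) (mmin_off tau_part_expr)) (MConst 2^-1))
  else MAdd (MAdd (tau_part_expr k) (MOpp (MMul (mmin_off tau_part_expr) (MConst 2^-1))))
            (MMul apex_weight_expr (MConst nR^-1)).

Lemma meval_mu_expr l : meval (coord_env l) mu_expr = mu l.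
Proof. by rewrite meval_mmin_off; apply: eq_min_off => j _; rewrite /= coord_env_ord. Qed.

Lemma meval_psi_expr l k : meval (coord_env l) (psi_expr k) = psi_bary l 0 k.
Proof.
rewrite mxE /psi_expr /gap_expr; case: eqP => _ /=;
by rewrite !oppr_min_opp meval_mu_expr !coord_env_ord.
Qed.

Lemma meval_tau_part_expr e j : meval (coord_env e) (tau_part_expr j) = tau_part e j.
Proof. by rewrite /= oppr_min_opp !coord_env_ord. Qed.

Lemma meval_psi_inv_expr e k : meval (coord_env e) (psi_inv_expr k) = psi_inv_bary e 0 k.
Proof.
have mu_invE : meval (coord_env e) (mmin_off tau_part_expr) = mu_inv e.
  by rewrite meval_mmin_off; apply: eq_min_off => j _; rewrite meval_tau_part_expr.
rewrite mxE /psi_inv_expr; case: eqP => _ /=; rewrite mu_invE.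
  by rewrite oppr_min_opp coord_env_ord.
by rewrite -meval_tau_part_expr /= !oppr_min_opp !coord_env_ord.
Qed.

Definition bary_expr (k : 'I_n.+1) : minexpr R :=
  MAdd (msum [seq MMul (MVar R i) (MConst (bary_mx (lshift 1 i) k)) | i : 'I_n <- enum 'I_n])
       (MConst (bary_mx (rshift n ord0) k)).

Arguments bary_expr : simpl never.

Definition bary_subst (j : nat) : minexpr R :=
  if (j < n.+1)%N then bary_expr (inord j) else MConst 0.

Section AgreeingEnvironment.
Variables (m : nat) (y : 'rV[R]_m) (x : 'rV[R]_n).
Hypothesis y_agree : forall i : 'I_n, coord_env y i = x 0 i.

Lemma meval_bary_expr k : meval (coord_env y) (bary_expr k) = bary x 0 k.
Proof.
rewrite /bary_expr /= meval_msum /bary [in RHS]mxE big_split_ord /= big_ord1 row_mxEr.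
congr (_ + _); last by rewrite mxE mul1r.
by apply: eq_bigr => i _ /=; rewrite y_agree row_mxEl.
Qed.

Lemma meval_bary_subst j : meval (coord_env y) (bary_subst j) = coord_env (bary x) j.
Proof.
rewrite /bary_subst; case: ltnP => j_lt; last by rewrite coord_env_out.
by rewrite meval_bary_expr -[in RHS](inordK j_lt) coord_env_ord.
Qed.

End AgreeingEnvironment.

Definition bary_map (F : 'I_n.+1 -> minexpr R) (x : 'rV[R]_n) : 'rV[R]_n :=
  (\row_k meval (coord_env (bary x)) (F k)) *m V2.

Definition bary_map_expr (F : 'I_n.+1 -> minexpr R) (i : 'I_n) : minexpr R :=
  msum [seq MMul (msubst bary_subst (F k)) (MConst (V2 k i)) | k <- enum 'I_n.+1].

Arguments bary_map_expr : simpl never.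

Lemma meval_bary_map_expr (m : nat) (y : 'rV[R]_m) x F i :
  (forall i : 'I_n, coord_env y i = x 0 i) ->
  meval (coord_env y) (bary_map_expr F i) = bary_map F x 0 i.
Proof.
move=> y_agree; rewrite /bary_map_expr meval_msum !mxE; apply: eq_bigr => k _ /=.
by rewrite mxE meval_subst; congr (_ * _); apply: eq_meval => j; apply: meval_bary_subst.
Qed.

Lemma bary_map_row F x : bary_map F x = \row_i meval (coord_env x) (bary_map_expr F i).
Proof.
by apply/rowP => i; rewrite mxE (@meval_bary_map_expr _ x x) // => j; rewrite coord_env_ord.
Qed.

Lemma continuous_bary_map F (A : 'rV[R]_n -> Prop) : continuous_on A (bary_map F).
Proof.
move=> x Ax e e_gt0.
have [d d_gt0 H] := continuous_on_row_meval (bary_map_expr F) Ax e_gt0.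
by exists d => // y Ay; rewrite !bary_map_row; apply: H.
Qed.

Definition msqr (t : minexpr R) := MMul t t.

Definition graph_expr (F : 'I_n.+1 -> minexpr R) :=
  MAdd (msum [seq msqr (MMin (bary_expr k) (MConst 0)) | k <- enum 'I_n.+1])
       (msum [seq msqr (MAdd (MVar R (n + i)) (MOpp (bary_map_expr F i)))
                | i : 'I_n <- enum 'I_n]).

Lemma meval_graph_expr F (z : 'rV[R]_(n + n)) :
  meval (coord_env z) (graph_expr F) = 0 <->
  simplex V2 (lsubmx z) /\ rsubmx z = bary_map F (lsubmx z).
Proof.
have z_agree (i : 'I_n) : coord_env z i = lsubmx z 0 i.
  by rewrite (coord_envE z (ltn_addr n (ltn_ord i))) mxE; congr (z 0 _); apply: val_inj.
have right_coord (i : 'I_n) : coord_env z (n + i) = rsubmx z 0 i.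
  have ni_lt : (n + i < n + n)%N by rewrite ltn_add2l.
  by rewrite (coord_envE z ni_lt) mxE; congr (z 0 _); apply: val_inj.
rewrite /= !meval_msum.
rewrite (eq_bigr (fun k => Num.min (bary (lsubmx z) 0 k) 0 * Num.min (bary (lsubmx z) 0 k) 0));
  last by move=> k _; cbn -[coord_env]; rewrite (meval_bary_expr z_agree).
rewrite (eq_bigr (fun i => (rsubmx z 0 i - bary_map F (lsubmx z) 0 i) *
                           (rsubmx z 0 i - bary_map F (lsubmx z) 0 i)));
  last by move=> i _; cbn -[coord_env]; rewrite right_coord (meval_bary_map_expr _ _ z_agree).
rewrite sigma2_baryP; split=> [/eqP|[bary_ge0 zE]].
  rewrite paddr_eq0 ?sumr_ge0 // => [|i _|i _]; try exact: mulr_self_ge0.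
  case/andP=> /eqP/sum_sqr_eq0 mins0 /eqP/sum_sqr_eq0 diff0; split.
    by move=> k; apply/min_idPr; rewrite mins0.
  by apply/rowP => i; apply/eqP; rewrite -subr_eq0 diff0.
rewrite (proj2 (sum_sqr_eq0 _)) ?(proj2 (sum_sqr_eq0 _)) ?addr0 // => [i|k].
  by rewrite zE subrr.
exact/min_idPr/bary_ge0.
Qed.

Lemma semialgebraic_bary_map F : semialgebraic_map (simplex V2) (bary_map F).
Proof.
have [L LE] := semialgebraic_meval_eq0 (n + n) (graph_expr F).
by exists L => z; rewrite -LE meval_graph_expr.
Qed.

Definition psi := bary_map psi_expr.
Definition psi_inv := bary_map psi_inv_expr.

Lemma bary_psi x : bary (psi x) = psi_bary (bary x).
Proof.
rewrite /psi /bary_map (_ : \row_k _ = psi_bary (bary x)).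
  by rewrite bary_mulmx // sum_psi_bary sum_bary.
by apply/rowP => k; rewrite mxE meval_psi_expr.
Qed.

Lemma bary_psi_inv y : bary (psi_inv y) = psi_inv_bary (bary y).
Proof.
rewrite /psi_inv /bary_map (_ : \row_k _ = psi_inv_bary (bary y)).
  by rewrite bary_mulmx // sum_psi_inv_bary sum_bary.
by apply/rowP => k; rewrite mxE meval_psi_inv_expr.
Qed.

Lemma psiK : cancel psi psi_inv.
Proof.
by move=> x; rewrite -[RHS]baryK -[bary x]psi_baryK -bary_psi -bary_psi_inv baryK.
Qed.

Lemma psi_invK : cancel psi_inv psi.
Proof.
by move=> y; rewrite -[RHS]baryK -[bary y]psi_inv_baryK -bary_psi_inv -bary_psi baryK.
Qed.

Lemma psi_bary_gap_ge0_ge0 l : 0 <= gap l -> (forall k, 0 <= l 0 k) ->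
  forall k, 0 <= psi_bary l 0 k.
Proof.
move=> gap_ge0 l_ge0 k; have [pa pj] := psi_bary_gap_ge0 gap_ge0.
have mu_ge0 : 0 <= mu l by apply: min_off_ge0.
by case: (eqVneq k a) => [->|ka]; rewrite ?pa ?pj // addr_ge0.
Qed.

Lemma psi_bary_gap_lt0_decomp l : gap l < 0 -> \sum_k l 0 k = 1 ->
  exists s (w : 'rV[R]_n.+1), [/\ 0 < s, w 0 a = 0,
    forall j, j != a -> 2 / nR * l 0 a <= w 0 j, \sum_k w 0 k = 1 - s &
    psi_bary l = w + s *: apex].
Proof.
move=> gap_lt0 l1; have [pa pj] := psi_bary_gap_lt0 gap_lt0.
have coordE j : (psi_bary l + gap l *: apex) 0 j = psi_bary l 0 j + gap l * apex 0 j.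
  by rewrite [LHS]mxE [X in _ + X]mxE.
exists (- gap l), (psi_bary l + gap l *: apex); split.
- by rewrite oppr_gt0.
- by rewrite coordE pa mulNr addNr.
- move=> j ja; rewrite coordE pj // subrK.
  by have := min_off_le (fun j => l 0 j) ja; rewrite -/(mu l) => mu_le; lra.
- by rewrite sum_rowD sum_rowZ sum_psi_bary l1 sum_apex mulr1 opprK.
- by rewrite scaleNr addrK.
Qed.

Lemma psi_inv_bary_ge0 e : (forall j, j != a -> 0 <= tau_part e j) ->
  forall k, 0 <= psi_inv_bary e 0 k.
Proof.
move=> tau_ge0 k; have mu_ge0 : 0 <= mu_inv e by apply: min_off_ge0.
have weight_ge0 : 0 <= apex_weight e by rewrite le_max lexx orbT.
case: (eqVneq k a) => [->|ka]; rewrite mxE ?eqxx ?(negbTE ka).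
  by rewrite addr_ge0 ?le_max ?lexx ?orbT // !mulr_ge0 ?invr_ge0 ?ler0n.
have := min_off_le (tau_part e) ka; rewrite -/(mu_inv e) => mu_le.
have : 0 <= apex_weight e / nR by rewrite divr_ge0 ?ler0n.
have : 0 <= mu_inv e / 2 by rewrite divr_ge0.
lra.
Qed.

Lemma apex_weight_comb (w : 'rV[R]_n.+1) s : w 0 a = 0 -> 0 <= s ->
  apex_weight (w + s *: apex) = s.
Proof.
move=> wa0 s_ge0; have ea : (w + s *: apex) 0 a = s * apex 0 a by rewrite !mxE wa0 add0r.
case: (leP 0 ((w + s *: apex) 0 a)) => [ea_ge0|ea_lt0].
  rewrite apex_weight_ea_ge0 //; apply/le_anti; rewrite s_ge0 /=.
  by move: ea_ge0; rewrite ea; have := apex_a_lt0; nra.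
by have [_] := apex_weight_ea_lt0 ea_lt0; rewrite ea; apply: (mulIf apex_a_neq0).
Qed.

Lemma tau_part_comb (w : 'rV[R]_n.+1) s j : w 0 a = 0 -> 0 <= s ->
  tau_part (w + s *: apex) j = w 0 j.
Proof. by move=> wa0 s_ge0; rewrite /tau_part apex_weight_comb // !mxE addrK. Qed.

Lemma psi_inv_in_sigma2 y : simplex V1 y \/ simplex V2 y -> simplex V2 (psi_inv y).
Proof.
move=> y_in; apply/sigma2_baryP; rewrite bary_psi_inv; apply: psi_inv_bary_ge0 => j ja.
case: y_in => [/sigma1_baryP [s [w [s_ge0 wa0 w_ge0 _ ->]]]|/sigma2_baryP by_ge0].
  by rewrite tau_part_comb.
by rewrite /tau_part apex_weight_ea_ge0 // mul0r subr0.
Qed.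

Lemma psi_in_union x : simplex V2 x -> simplex V1 (psi x) \/ simplex V2 (psi x).
Proof.
move=> /sigma2_baryP bx_ge0; case: (leP 0 (gap (bary x))) => [gap_ge0|gap_lt0].
  by right; apply/sigma2_baryP; rewrite bary_psi; apply: psi_bary_gap_ge0_ge0.
left; apply/sigma1_baryP; rewrite bary_psi.
have [s [w [s_gt0 wa0 w_ge w1 ->]]] := psi_bary_gap_lt0_decomp gap_lt0 (sum_bary x).
exists s, w; split=> //; first exact: ltW.
move=> k; case: (eqVneq k a) => [->|ka]; first by rewrite wa0.
by apply: le_trans (w_ge k ka); rewrite !mulr_ge0 ?invr_ge0 ?ler0n.
Qed.

Lemma psi_inv_bary_a_gt0 y :
  simplex_relint V1 y \/ (simplex V2 y /\ ~ simplex_bd (facet_vertices V2 a) y) ->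
  0 < psi_inv_bary (bary y) 0 a.
Proof.
case=> [/relint1_baryP [s [w [s_gt0 wa0 w_gt0 _ bE]]]|[/sigma2_baryP by_ge0 y_nbd]].
  have ea_lt0 : bary y 0 a < 0.
    by rewrite bE !mxE wa0 add0r pmulr_rlt0 ?apex_a_lt0.
  have [-> _] := psi_inv_bary_ea_lt0 ea_lt0.
  rewrite !mulr_gt0 ?invr_gt0 ?ltr0n ?nR_gt0 //; apply: min_off_gt0 => j ja.
  by rewrite bE tau_part_comb ?w_gt0 // ltW.
have [-> _] := psi_inv_bary_ea_ge0 (by_ge0 a).
have tauE j : tau_part (bary y) j = bary y 0 j.
  by rewrite /tau_part apex_weight_ea_ge0 // mul0r subr0.
have mu_ge0 : 0 <= mu_inv (bary y) by apply: min_off_ge0 => j _; rewrite tauE.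
move: (by_ge0 a); rewrite le0r => /predU1P[ya0|ya_gt0]; last first.
  by rewrite ltr_pwDl // !mulr_ge0 ?invr_ge0 ?ler0n.
rewrite ya0 add0r !mulr_gt0 ?invr_gt0 ?nR_gt0 //.
rewrite ltNge; apply/negP => mu_le0; apply: y_nbd; split; first exact/tau_baryP.
move=> /tau_relint_baryP [_ y_pos].
have [j ja mu_invE] := min_off_attained (tau_part (bary y)).
by move: mu_le0; rewrite /mu_inv mu_invE tauE leNgt y_pos.
Qed.

Lemma psi_inv_notin_tau y :
  simplex_relint V1 y \/ (simplex V2 y /\ ~ simplex_bd (facet_vertices V2 a) y) ->
  simplex V2 (psi_inv y) /\ ~ simplex (facet_vertices V2 a) (psi_inv y).
Proof.
move=> yD; split.
  by apply: psi_inv_in_sigma2; case: yD => [/simplex_relint_simplex|[]]; [left|right].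
case/tau_baryP; rewrite bary_psi_inv => /eqP; rewrite gt_eqF //.
exact: psi_inv_bary_a_gt0.
Qed.

Lemma psi_notin_tau x : simplex V2 x -> ~ simplex (facet_vertices V2 a) x ->
  simplex_relint V1 (psi x) \/
  (simplex V2 (psi x) /\ ~ simplex_bd (facet_vertices V2 a) (psi x)).
Proof.
move=> /sigma2_baryP bx_ge0 x_ntau.
have xa_gt0 : 0 < bary x 0 a.
  by rewrite lt0r bx_ge0 andbT; apply/eqP => xa0; apply: x_ntau; apply/tau_baryP.
case: (leP 0 (gap (bary x))) => [gap_ge0|gap_lt0]; last first.
  left; apply/relint1_baryP; rewrite bary_psi.
  have [s [w [s_gt0 wa0 w_ge w1 ->]]] := psi_bary_gap_lt0_decomp gap_lt0 (sum_bary x).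
  exists s, w; split=> // j ja; apply: lt_le_trans (w_ge j ja).
  by rewrite !mulr_gt0 ?invr_gt0 ?nR_gt0.
have [pa pj] := psi_bary_gap_ge0 gap_ge0.
right; split; first by apply/sigma2_baryP; rewrite bary_psi; apply: psi_bary_gap_ge0_ge0.
case=> /tau_baryP [pa0 _]; apply; apply/tau_relint_baryP; rewrite bary_psi in pa0 *.
have mu_gt0 : 0 < mu (bary x).
  by move: pa0; rewrite pa /gap => /eqP; rewrite subr_eq0 => /eqP; have := nR_gt0; nra.
by split=> // j ja; rewrite pj // ltr_wpDl ?bx_ge0.
Qed.

Lemma psi_id x : simplex_bd V2 x -> ~ simplex_relint (facet_vertices V2 a) x -> psi x = x.
Proof.
move=> [/sigma2_baryP bx_ge0 x_nrel] x_ntau0.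
have mu0 : mu (bary x) = 0.
  apply/le_anti; rewrite min_off_ge0 // andbT leNgt; apply/negP => mu_gt0.
  have pos j : j != a -> 0 < bary x 0 j.
    by move=> ja; apply: lt_le_trans mu_gt0 (min_off_le _ ja).
  move: (bx_ge0 a); rewrite le0r => /predU1P[xa0|xa_gt0].
    by apply: x_ntau0; apply/tau_relint_baryP.
  by apply: x_nrel; apply/relint2_baryP => k; case: (eqVneq k a) => [->|/pos].
have gap_ge0 : 0 <= gap (bary x) by rewrite /gap mu0 mulr0 subr0.
have [pa pj] := psi_bary_gap_ge0 gap_ge0.
rewrite -[RHS]baryK -[psi x]baryK bary_psi; congr (_ *m _); apply/rowP => k.
by case: (eqVneq k a) => [->|ka]; rewrite ?pa ?pj // /gap mu0 ?mulr0 ?subr0 ?addr0.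
Qed.

Lemma psi_gluing :
  let sigma1 := simplex V1 in
  let sigma2 := simplex V2 in
  let tau := simplex (facet_vertices V2 a) in
  let tau0 := simplex_relint (facet_vertices V2 a) in
  let dtau := simplex_bd (facet_vertices V2 a) in
  let D := fun x => simplex_relint V1 x \/ (sigma2 x /\ ~ dtau x) in
  let Dbar := fun x => sigma1 x \/ sigma2 x in
  exists psi : 'rV[R]_n -> 'rV[R]_n,
    [/\ semialgebraic_map sigma2 psi,
        homeomorphism_on sigma2 Dbar psi,
        (forall y, D y <-> exists2 x, (sigma2 x /\ ~ tau x) & psi x = y) &
        (forall x, simplex_bd V2 x -> ~ tau0 x -> psi x = x)].
Proof.
move=> sigma1 sigma2 tau tau0 dtau D Dbar.
exists psi; split; first exact: semialgebraic_bary_map.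
- split; first exact: psi_in_union.
  split; first exact: continuous_bary_map.
  exists psi_inv; split; first exact: psi_inv_in_sigma2.
  + exact: continuous_bary_map.
  + by move=> x _; apply: psiK.
  + by move=> y _; apply: psi_invK.
- move=> y; split=> [yD|[x [x2 x_ntau] <-]]; last exact: psi_notin_tau.
  by exists (psi_inv y); [apply: psi_inv_notin_tau | apply: psi_invK].
- exact: psi_id.
Qed.

End Gluing.

Theorem mainTheorem12 (R : rcfType) (n : nat) (n_gt0 : (0 < n)%N)
    (V1 V2 : 'M[R]_(n.+1, n))
    (hV1 : aff_indep V1) (hV2 : aff_indep V2)
    (i1 i2 : 'I_n.+1)
    (htau_common : forall x, simplex (facet_vertices V1 i1) x <->
                             simplex (facet_vertices V2 i2) x)
    (hcap : forall x, (simplex V1 x /\ simplex V2 x) <->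
                      simplex (facet_vertices V2 i2) x) :
  let sigma1 := simplex V1 in
  let sigma2 := simplex V2 in
  let tau := simplex (facet_vertices V2 i2) in
  let tau0 := simplex_relint (facet_vertices V2 i2) in
  let dtau := simplex_bd (facet_vertices V2 i2) in
  let D := fun x => simplex_relint V1 x \/ (sigma2 x /\ ~ dtau x) in
  let Dbar := fun x => sigma1 x \/ sigma2 x in
  exists psi : 'rV[R]_n -> 'rV[R]_n,
    [/\ semialgebraic_map sigma2 psi,
        homeomorphism_on sigma2 Dbar psi,
        (forall y, D y <-> exists2 x, (sigma2 x /\ ~ tau x) & psi x = y) &
        (forall x, simplex_bd V2 x -> ~ tau0 x -> psi x = x)].
Proof. exact: (psi_gluing n_gt0 hV1 hV2 htau_common hcap). Qed.
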